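(* Let $\mathcal R$ be a CCTRS. (1) If $s,t\in\mathcal T(\mathcal F,\mathcal V)$ and $s\sqsupset t$, then $\mathrm{label}(s)\rightharpoonup_\rhd\mathrm{label}(t)$. (2) If $s,t\in\mathcal T(\mathcal G,\mathcal V)$ and $s\rightharpoonup_\rhd t$, then $\mathrm{erase}(s)\sqsupset\mathrm{erase}(t)$.
   Context: Terms are built from a signature $\mathcal F$ and variables $\mathcal V$. An (oriented) conditional rewrite rule has the form $\ell\to r\Leftarrow a_1\approx b_1,\dots,a_k\approx b_k$ with $k\ge0$; $s\to_{\mathcal R}t$ iff there are a position $p$, a rule and a substitution $\sigma$ with $s|_p=\ell\sigma$, $t=s[r\sigma]_p$ and $a_j\sigma\to_{\mathcal R}^*b_j\sigma$ for all $j$ (formally the union of the usual approximations $\to_{\mathcal R_i}$). Defined symbols are root symbols of left-hand sides, others are constructors; constructor terms contain only constructors and variables. $\mathcal R{\restriction}f$ is the set of rules whose left-hand side has root $f$. A CCTRS is a set $\mathcal R$ of rules each of the form $f(\ell_1,\dots,\ell_n)\to r\Leftarrow a_1\approx b_1,\dots,a_k\approx b_k$ where $\ell_1,\dots,\ell_n,b_1,\dots,b_k$ are constructor terms, the terms $f(\ell_1,\dots,\ell_n),b_1,\dots,b_k$ pairwise have no common variables, $\mathrm{Var}(r)\subseteq\mathrm{Var}(\ell_1,\dots,\ell_n,b_1,\dots,b_k)$ and $\mathrm{Var}(a_i)\subseteq\mathrm{Var}(\ell_1,\dots,\ell_n,b_1,\dots,b_{i-1})$. Write $s\sqsupset t$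 (for unlabeled terms) if there are a position $p$, a rule $\ell\to r\Leftarrow a_1\approx b_1,\dots,a_k\approx b_k$, a substitution $\sigma$ and $1\le i\le k$ with $s|_p=\ell\sigma$, $a_j\sigma\to^* b_j\sigma$ for $1\le j<i$, and $t=a_i\sigma$. Labeled terms: the labeled signature $\mathcal G$ consists of the constructors of $\mathcal F$ together with a symbol $f_R$ (same arity as $f$) for every defined $f$ and every $R\subseteq\mathcal R{\restriction}f$. $\mathrm{label}(t)$ replaces every defined $f$ by $f_{\mathcal R\restriction f}$; $\mathrm{erase}$ removes all labels. A labeled normal form is a term built only from constructors, symbols $f_\emptyset$, and variables. The labeled step relation $\rightharpoonup$ is defined inductively: $s\rightharpoonup t$ if either (i) there are a position $p$ and a rule $\rho\colon\ell\to r\Leftarrow c$ with $s|_p=f_R(s_1,\dots,s_n)$, $\rho\in R$, $t=s[f_{R\setminus\{\rho\}}(s_1,\dots,s_n)]_p$, and linear labeled normal forms $u_1,\dots,u_n$ on fresh variables and $\sigma$ with $s|_p=f_R(u_1,\dots,u_n)\sigma$ and $f(\mathrm{erase}(u_1),\dots,\mathrm{erase}(u_n))$ not unifiable with $\ell$; or (ii) there are $p$, a rule $\rho\colon f(\ell_1,\dots,\ell_n)\to r\Leftarrow a_1\approx b_1,\dots,a_k\approx b_k$, $\sigma$ and $0\le j\le k$ with $s|_p=f_R(\ell_1\sigma,\dots,\ell_n\sigma)$, $\rho\in R$, $\mathrm{label}(a_i)\sigma\rightharpoonup^*b_i\sigma$ for $1\le i\le j$, and either $j=k$ and $t=s[\mathrm{label}(r)\sigma]_p$,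 or $j<k$, $\mathrm{label}(a_{j+1})\sigma\rightharpoonup^*u\tau$ for some linear labeled normal form $u$ with $\mathrm{erase}(u)$ not unifiable with $b_{j+1}$ and some $\tau$, and $t=s[f_{R\setminus\{\rho\}}(\ell_1\sigma,\dots,\ell_n\sigma)]_p$. Finally $s\rightharpoonup_\rhd t$ if there are a position $p$, a rule $\rho$ as in (ii), a substitution $\sigma$ and $0\le j<k$ with $s|_p=f_R(\ell_1\sigma,\dots,\ell_n\sigma)$, $\rho\in R$, $\mathrm{label}(a_i)\sigma\rightharpoonup^*b_i\sigma$ for $1\le i\le j$, and $t=\mathrm{label}(a_{j+1})\sigma$. *)

From Stdlib Require Import List Arith ClassicalEpsilon.
Import ListNotations.
Set Implicit Arguments.

Inductive term (F : Type) : Type :=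
| Var (x : nat)
| Fun (f : F) (ts : list (term F)).
Arguments Var {F} x.
Arguments Fun {F} f ts.

Fixpoint subst {F : Type} (sg : nat -> term F) (t : term F) : term F :=
  match t with
  | Var x => sg x
  | Fun f ts => Fun f (map (subst sg) ts)
  end.

Fixpoint vars {F : Type} (t : term F) : list nat :=
  match t with
  | Var x => [x]
  | Fun _ ts => flat_map vars ts
  end.

Fixpoint funs {F : Type} (t : term F) : list F :=
  match t with
  | Var _ => []
  | Fun f ts => f :: flat_map funs ts
  end.

Inductive ctx (F : Type) : Type :=
| Hole
| CFun (f : F) (l : list (term F)) (C : ctx F) (r : list (term F)).
Arguments Hole {F}.

Fixpoint fill {F : Type} (C : ctx F) (t : term F) : term F :=
  match C with
  | Hole => t
  | CFun f l C' r => Fun f (l ++ fill C' t :: r)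
  end.

Definition unifiable {F : Type} (s t : term F) : Prop :=
  exists th : nat -> term F, subst th s = subst th t.

Record rule (F : Type) : Type := mkRule {
  lhs : term F;
  rhs : term F;
  conds : list (term F * term F) }.

Definition rule_vars {F : Type} (rho : rule F) : list nat :=
  vars (lhs rho) ++ vars (rhs rho) ++
  flat_map (fun c => vars (fst c) ++ vars (snd c)) (conds rho).

Definition trs (F : Type) := rule F -> Prop.

Definition root_is {F : Type} (f : F) (t : term F) : Prop :=
  exists ts, t = Fun f ts.

Definition defined {F : Type} (R : trs F) (f : F) : Prop :=
  exists rho, R rho /\ root_is f (lhs rho).

Definition constructor_term {F : Type} (R : trs F) (t : term F) : Prop :=
  forall g, In g (funs t) -> ~ defined R g.

Definition disjoint (l1 l2 : list nat) : Prop :=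
  forall x, In x l1 -> In x l2 -> False.

Definition CCTRS {F : Type} (R : trs F) : Prop :=
  forall rho, R rho ->
    exists f ls, lhs rho = Fun f ls /\
      Forall (constructor_term R) ls /\
      Forall (fun c => constructor_term R (snd c)) (conds rho) /\
      (let L := lhs rho :: map snd (conds rho) in
       forall i j, i < length L -> j < length L -> i <> j ->
         disjoint (vars (nth i L (Var 0))) (vars (nth j L (Var 0)))) /\
      incl (vars (rhs rho)) (vars (lhs rho) ++ flat_map (fun c => vars (snd c)) (conds rho)) /\
      (forall i, i < length (conds rho) ->
         incl (vars (fst (nth i (conds rho) (Var 0, Var 0))))
              (vars (lhs rho) ++ flat_map (fun c => vars (snd c)) (firstn i (conds rho)))).

(* ---------- conditional rewriting (least fixed point = union of the R_i) ---------- *)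
Inductive rstep {F : Type} (R : trs F) : term F -> term F -> Prop :=
| RStep (C : ctx F) (rho : rule F) (sg : nat -> term F) :
    R rho ->
    (forall c, In c (conds rho) -> rsteps R (subst sg (fst c)) (subst sg (snd c))) ->
    rstep R (fill C (subst sg (lhs rho))) (fill C (subst sg (rhs rho)))
with rsteps {F : Type} (R : trs F) : term F -> term F -> Prop :=
| RRefl s : rsteps R s s
| RTrans s t u : rstep R s t -> rsteps R t u -> rsteps R s u.

Definition cnth {F : Type} (rho : rule F) (i : nat) : term F * term F :=
  nth i (conds rho) (Var 0, Var 0).

(* s ⊐ t  (i is 0-based: t = a_{i+1} sigma) *)
Definition sqsup {F : Type} (R : trs F) (s t : term F) : Prop :=
  exists (C : ctx F) (rho : rule F) (sg : nat -> term F) (i : nat),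
    R rho /\ s = fill C (subst sg (lhs rho)) /\ i < length (conds rho) /\
    (forall j, j < i -> rsteps R (subst sg (fst (cnth rho j))) (subst sg (snd (cnth rho j)))) /\
    t = subst sg (fst (cnth rho i)).

(* LCon f ts : a constructor f (unlabeled);  LDef f L ts : the labeled symbol f_L,
   where the label L is a set of rules. *)
Inductive lterm (F : Type) : Type :=
| LVar (x : nat)
| LCon (f : F) (ts : list (lterm F))
| LDef (f : F) (L : rule F -> Prop) (ts : list (lterm F)).
Arguments LVar {F} x.
Arguments LCon {F} f ts.
Arguments LDef {F} f L ts.

Definition rules_of {F : Type} (R : trs F) (f : F) : rule F -> Prop :=
  fun rho => R rho /\ root_is f (lhs rho).

Definition remove_rule {F : Type} (L : rule F -> Prop) (rho : rule F) : rule F -> Prop :=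
  fun rho' => L rho' /\ rho' <> rho.

Fixpoint label {F : Type} (R : trs F) (t : term F) : lterm F :=
  match t with
  | Var x => LVar x
  | Fun f ts =>
      if excluded_middle_informative (defined R f)
      then LDef f (rules_of R f) (map (label R) ts)
      else LCon f (map (label R) ts)
  end.

Fixpoint erase {F : Type} (t : lterm F) : term F :=
  match t with
  | LVar x => Var x
  | LCon f ts => Fun f (map erase ts)
  | LDef f _ ts => Fun f (map erase ts)
  end.

Fixpoint lsubst {F : Type} (sg : nat -> lterm F) (t : lterm F) : lterm F :=
  match t with
  | LVar x => sg x
  | LCon f ts => LCon f (map (lsubst sg) ts)
  | LDef f L ts => LDef f L (map (lsubst sg) ts)
  end.

Fixpoint lvars {F : Type} (t : lterm F) : list nat :=
  match t with
  | LVar x => [x]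
  | LCon _ ts => flat_map lvars ts
  | LDef _ _ ts => flat_map lvars ts
  end.

(* membership in T(G,V) *)
Inductive lwf {F : Type} (R : trs F) : lterm F -> Prop :=
| LwfVar x : lwf R (LVar x)
| LwfCon f ts : ~ defined R f -> Forall (lwf R) ts -> lwf R (LCon f ts)
| LwfDef f L ts : defined R f -> (forall rho, L rho -> rules_of R f rho) ->
    Forall (lwf R) ts -> lwf R (LDef f L ts).

Definition lwf_subst {F : Type} (R : trs F) (sg : nat -> lterm F) : Prop :=
  forall x, lwf R (sg x).

Inductive lnf {F : Type} (R : trs F) : lterm F -> Prop :=
| LnfVar x : lnf R (LVar x)
| LnfCon f ts : ~ defined R f -> Forall (lnf R) ts -> lnf R (LCon f ts)
| LnfDef f L ts : defined R f -> (forall rho, ~ L rho) ->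
    Forall (lnf R) ts -> lnf R (LDef f L ts).

Definition lin_lnf_fresh {F : Type} (R : trs F) (us : list (lterm F)) (rho : rule F) : Prop :=
  Forall (lnf R) us /\ NoDup (flat_map lvars us) /\
  disjoint (flat_map lvars us) (rule_vars rho).

Inductive lctx (F : Type) : Type :=
| LHole
| LCCon (f : F) (l : list (lterm F)) (C : lctx F) (r : list (lterm F))
| LCDef (f : F) (L : rule F -> Prop) (l : list (lterm F)) (C : lctx F) (r : list (lterm F)).
Arguments LHole {F}.

Fixpoint lfill {F : Type} (C : lctx F) (t : lterm F) : lterm F :=
  match C with
  | LHole => t
  | LCCon f l C' r => LCon f (l ++ lfill C' t :: r)
  | LCDef f L l C' r => LDef f L (l ++ lfill C' t :: r)
  end.

Definition lapp {F : Type} (R : trs F) (sg : nat -> lterm F) (t : term F) : lterm F :=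
  lsubst sg (label R t).

Inductive lstep {F : Type} (R : trs F) : lterm F -> lterm F -> Prop :=
| LStepSkip (C : lctx F) (f : F) (L : rule F -> Prop) (rho : rule F)
    (us : list (lterm F)) (sg : nat -> lterm F) :
    L rho -> lin_lnf_fresh R us rho -> lwf_subst R sg ->
    ~ unifiable (Fun f (map erase us)) (lhs rho) ->
    lstep R (lfill C (LDef f L (map (lsubst sg) us)))
            (lfill C (LDef f (remove_rule L rho) (map (lsubst sg) us)))
| LStepApply (C : lctx F) (f : F) (L : rule F -> Prop) (rho : rule F)
    (ls : list (term F)) (sg : nat -> lterm F) :
    L rho -> lhs rho = Fun f ls -> lwf_subst R sg ->
    (forall j, j < length (conds rho) ->
       lsteps R (lapp R sg (fst (cnth rho j))) (lapp R sg (snd (cnth rho j)))) ->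
    lstep R (lfill C (LDef f L (map (lapp R sg) ls)))
            (lfill C (lapp R sg (rhs rho)))
| LStepFail (C : lctx F) (f : F) (L : rule F -> Prop) (rho : rule F)
    (ls : list (term F)) (sg : nat -> lterm F) (j : nat) (u : lterm F) (tau : nat -> lterm F) :
    L rho -> lhs rho = Fun f ls -> lwf_subst R sg -> j < length (conds rho) ->
    (forall i, i < j ->
       lsteps R (lapp R sg (fst (cnth rho i))) (lapp R sg (snd (cnth rho i)))) ->
    lin_lnf_fresh R [u] rho -> lwf_subst R tau ->
    lsteps R (lapp R sg (fst (cnth rho j))) (lsubst tau u) ->
    ~ unifiable (erase u) (snd (cnth rho j)) ->
    lstep R (lfill C (LDef f L (map (lapp R sg) ls)))
            (lfill C (LDef f (remove_rule L rho) (map (lapp R sg) ls)))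
with lsteps {F : Type} (R : trs F) : lterm F -> lterm F -> Prop :=
| LRefl s : lsteps R s s
| LTrans s t u : lstep R s t -> lsteps R t u -> lsteps R s u.

(* s ⇀_▷ t  (j is 0-based: t = label(a_{j+1}) sigma) *)
Definition lsup {F : Type} (R : trs F) (s t : lterm F) : Prop :=
  exists (C : lctx F) (f : F) (L : rule F -> Prop) (rho : rule F)
         (ls : list (term F)) (sg : nat -> lterm F) (j : nat),
    L rho /\ lhs rho = Fun f ls /\ lwf_subst R sg /\ j < length (conds rho) /\
    s = lfill C (LDef f L (map (lapp R sg) ls)) /\
    (forall i, i < j ->
       lsteps R (lapp R sg (fst (cnth rho i))) (lapp R sg (snd (cnth rho i)))) /\
    t = lapp R sg (fst (cnth rho j)).

(** Labeling and erasing commute with substitutions and contexts, so an instance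
    [l sigma] of a rule labels to a labeled redex carrying the full label [R|f],
    and a labeled redex erases to an instance of the rule.  It remains to transport
    the conditions: every unlabeled reduction [a sigma ->* b sigma] is simulated
    by labeled steps of kind (ii) with [j = k], and every labeled reduction from a
    well-formed term erases to an unlabeled one, since steps of kind (i) and the
    failing steps of kind (ii) only shrink a label and so erase to the identity.
    Well-formedness is what guarantees that a label only contains rules of [R]. *)

From Stdlib Require Import List Arith ClassicalEpsilon.

Scheme rstep_mut_ind := Induction for rstep Sort Prop
with rsteps_mut_ind := Induction for rsteps Sort Prop.
Combined Scheme rstep_rsteps_ind from rstep_mut_ind, rsteps_mut_ind.

Scheme lstep_mut_ind := Induction for lstep Sort Prop
with lsteps_mut_ind := Induction for lsteps Sort Prop.
Combined Scheme lstep_lsteps_ind from lstep_mut_ind, lsteps_mut_ind.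

Section Labeling.
Variable F : Type.
Variable R : trs F.

Fixpoint term_nested_ind (P : term F -> Prop) (Hvar : forall x, P (Var x))
  (Hfun : forall f ts, Forall P ts -> P (Fun f ts)) (t : term F) : P t :=
  match t with
  | Var x => Hvar x
  | Fun f ts => Hfun f ts ((fix all (ts : list (term F)) : Forall P ts :=
      match ts with
      | nil => Forall_nil _
      | t :: ts' => Forall_cons _ (term_nested_ind P Hvar Hfun t) (all ts')
      end) ts)
  end.

Fixpoint lterm_nested_ind (P : lterm F -> Prop) (Hvar : forall x, P (LVar x))
  (Hcon : forall f ts, Forall P ts -> P (LCon f ts))
  (Hdef : forall f L ts, Forall P ts -> P (LDef f L ts)) (t : lterm F) : P t :=
  let all := fix all (ts : list (lterm F)) : Forall P ts :=
      match ts with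
      | nil => Forall_nil _
      | t :: ts' => Forall_cons _ (lterm_nested_ind P Hvar Hcon Hdef t) (all ts')
      end in
  match t with
  | LVar x => Hvar x
  | LCon f ts => Hcon f ts (all ts)
  | LDef f L ts => Hdef f L ts (all ts)
  end.

Lemma label_subst (sg : nat -> term F) (t : term F) :
  label R (subst sg t) = lapp R (fun x => label R (sg x)) t.
Proof.
  unfold lapp.
  induction t as [x|f ts IH] using term_nested_ind; simpl; auto.
  destruct (excluded_middle_informative (defined R f)); simpl; f_equal;
    rewrite !map_map; apply map_ext_Forall; exact IH.
Qed.

Lemma erase_label (t : term F) : erase (label R t) = t.
Proof.
  induction t as [x|f ts IH] using term_nested_ind; simpl; auto.
  destruct (excluded_middle_informative (defined R f)); simpl; f_equal;
    rewrite map_map; rewrite <- (map_id ts) at 2; apply map_ext_Forall; exact IH.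
Qed.

Lemma erase_lsubst (sg : nat -> lterm F) (t : lterm F) :
  erase (lsubst sg t) = subst (fun x => erase (sg x)) (erase t).
Proof.
  induction t as [x|f ts IH|f L ts IH] using lterm_nested_ind; simpl; auto;
    f_equal; rewrite !map_map; apply map_ext_Forall; exact IH.
Qed.

Lemma erase_lapp (sg : nat -> lterm F) (t : term F) :
  erase (lapp R sg t) = subst (fun x => erase (sg x)) t.
Proof. unfold lapp; rewrite erase_lsubst, erase_label; reflexivity. Qed.

Fixpoint label_ctx (C : ctx F) : lctx F :=
  match C with
  | Hole => LHole
  | CFun f l C r =>
      if excluded_middle_informative (defined R f)
      then LCDef f (rules_of R f) (map (label R) l) (label_ctx C) (map (label R) r)
      else LCCon f (map (label R) l) (label_ctx C) (map (label R) r)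
  end.

Lemma label_fill (C : ctx F) (t : term F) :
  label R (fill C t) = lfill (label_ctx C) (label R t).
Proof.
  induction C as [|f l C IH r]; simpl; auto.
  destruct (excluded_middle_informative (defined R f)); simpl;
    rewrite map_app; simpl; rewrite IH; reflexivity.
Qed.

Fixpoint erase_ctx (C : lctx F) : ctx F :=
  match C with
  | LHole => Hole
  | LCCon f l C r => CFun f (map erase l) (erase_ctx C) (map erase r)
  | LCDef f _ l C r => CFun f (map erase l) (erase_ctx C) (map erase r)
  end.

Lemma erase_lfill (C : lctx F) (t : lterm F) :
  erase (lfill C t) = fill (erase_ctx C) (erase t).
Proof.
  induction C as [|f l C IH r|f L l C IH r]; simpl; auto;
    rewrite map_app; simpl; rewrite IH; reflexivity.
Qed.

Lemma lwf_label (t : term F) : lwf R (label R t).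
Proof.
  induction t as [x|f ts IH] using term_nested_ind; simpl; [constructor|].
  destruct (excluded_middle_informative (defined R f));
    constructor; auto; apply Forall_map; exact IH.
Qed.

Lemma lwf_lsubst (sg : nat -> lterm F) (t : lterm F) :
  lwf_subst R sg -> lwf R t -> lwf R (lsubst sg t).
Proof.
  intro Hsg.
  induction t as [x|f ts IH|f L ts IH] using lterm_nested_ind; simpl; intro Ht; auto;
    inversion Ht; subst; constructor; auto; apply Forall_map;
    rewrite Forall_forall in *; auto.
Qed.

Lemma lwf_lapp {sg : nat -> lterm F} (t : term F) :
  lwf_subst R sg -> lwf R (lapp R sg t).
Proof. intro Hsg; apply lwf_lsubst, lwf_label; exact Hsg. Qed.

Lemma lwf_lfill_hole {C : lctx F} {t : lterm F} : lwf R (lfill C t) -> lwf R t.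
Proof.
  induction C as [|f l C IH r|f L l C IH r]; simpl; intro H; auto;
    inversion H as [|? ? _ Hts|? ? ? _ _ Hts]; subst;
    apply Forall_app in Hts as [_ Hts]; inversion Hts; auto.
Qed.

Lemma lwf_lfill_replace {C : lctx F} {t t' : lterm F} :
  lwf R (lfill C t) -> lwf R t' -> lwf R (lfill C t').
Proof.
  intros H Ht'. induction C as [|f l C IH r|f L l C IH r]; simpl in *; auto;
    inversion H as [|? ? Hd Hts|? ? ? Hd HL Hts]; subst;
    apply Forall_app in Hts as [Hl Hts]; inversion Hts; subst;
    constructor; auto; apply Forall_app; auto.
Qed.

Lemma lwf_lfill_label {C : lctx F} {f : F} {L : rule F -> Prop} {ts rho} :
  lwf R (lfill C (LDef f L ts)) -> L rho -> R rho.
Proof.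
  intros H HL. apply lwf_lfill_hole in H.
  inversion H as [| |? ? ? _ HLR _]; subst. apply (HLR rho HL).
Qed.

Lemma lwf_lfill_remove_rule {C : lctx F} {f : F} {L : rule F -> Prop} {ts} rho :
  lwf R (lfill C (LDef f L ts)) -> lwf R (lfill C (LDef f (remove_rule L rho) ts)).
Proof.
  intro H. apply (lwf_lfill_replace H).
  pose proof (lwf_lfill_hole H) as Hr; inversion Hr; subst.
  constructor; auto; intros rho' [Hrho' _]; auto.
Qed.

Lemma rules_of_lhs {rho : rule F} {f ls} :
  R rho -> lhs rho = Fun f ls -> rules_of R f rho.
Proof. intros HR Hl; split; auto; rewrite Hl; eexists; reflexivity. Qed.

Lemma label_subst_lhs {rho : rule F} {f ls} (sg : nat -> term F) :
  R rho -> lhs rho = Fun f ls ->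
  label R (subst sg (lhs rho)) =
  LDef f (rules_of R f) (map (lapp R (fun x => label R (sg x))) ls).
Proof.
  intros HR Hl. rewrite Hl; simpl.
  destruct (excluded_middle_informative (defined R f)) as [_|Hnd].
  - rewrite map_map; f_equal; apply map_ext; intro; apply label_subst.
  - exfalso; apply Hnd; exists rho; exact (rules_of_lhs HR Hl).
Qed.

Lemma erase_redex f (L : rule F -> Prop) ls (sg : nat -> lterm F) :
  erase (LDef f L (map (lapp R sg) ls)) = subst (fun x => erase (sg x)) (Fun f ls).
Proof. simpl; rewrite map_map; f_equal; apply map_ext, erase_lapp. Qed.

Lemma rsteps_trans {s t u : term F} : rsteps R s t -> rsteps R t u -> rsteps R s u.
Proof. induction 1; intros; auto; eapply RTrans; eauto. Qed.

Lemma lstep_apply_sound {C f L rho ls} {sg : nat -> lterm F} :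
  L rho -> lhs rho = Fun f ls -> lwf_subst R sg ->
  (forall j, j < length (conds rho) ->
     rsteps R (erase (lapp R sg (fst (cnth rho j)))) (erase (lapp R sg (snd (cnth rho j))))) ->
  lwf R (lfill C (LDef f L (map (lapp R sg) ls))) ->
  rstep R (erase (lfill C (LDef f L (map (lapp R sg) ls))))
          (erase (lfill C (lapp R sg (rhs rho)))).
Proof.
  intros HL Hl Hsg Hconds Hs.
  rewrite !erase_lfill, erase_redex, erase_lapp, <- Hl.
  constructor; [exact (lwf_lfill_label Hs HL)|].
  intros c Hin. destruct (In_nth _ _ (Var 0, Var 0) Hin) as [j [Hj <-]].
  rewrite <- !erase_lapp. exact (Hconds j Hj).
Qed.

Lemma lsteps_sound_mut :
  (forall s t, lstep R s t -> lwf R s -> rsteps R (erase s) (erase t) /\ lwf R t) /\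
  (forall s t, lsteps R s t -> lwf R s -> rsteps R (erase s) (erase t) /\ lwf R t).
Proof.
  apply lstep_lsteps_ind.
  - intros C f L rho us sg _ _ _ _ Hs.
    split; [rewrite !erase_lfill; constructor|exact (lwf_lfill_remove_rule rho Hs)].
  - intros C f L rho ls sg HL Hl Hsg _ IH Hs. split.
    + eapply RTrans; [|constructor].
      apply (lstep_apply_sound HL Hl Hsg); auto.
      intros j Hj; apply (IH j Hj), lwf_lapp; exact Hsg.
    + exact (lwf_lfill_replace Hs (lwf_lapp (rhs rho) Hsg)).
  - intros C f L rho ls sg j u tau _ _ _ _ _ _ _ _ _ _ _ Hs.
    split; [rewrite !erase_lfill; constructor|exact (lwf_lfill_remove_rule rho Hs)].
  - intros s Hs; split; [constructor|exact Hs].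
  - intros s t u _ IH1 _ IH2 Hs.
    destruct (IH1 Hs) as [Hst Ht]; destruct (IH2 Ht) as [Htu Hu].
    split; [exact (rsteps_trans Hst Htu)|exact Hu].
Qed.

Lemma lsteps_erase (s t : lterm F) :
  lwf R s -> lsteps R s t -> rsteps R (erase s) (erase t).
Proof. intros Hs Hst; exact (proj1 (proj2 lsteps_sound_mut s t Hst Hs)). Qed.

Lemma rsteps_label_mut :
  (forall rho, R rho -> exists f ls, lhs rho = Fun f ls) ->
  (forall s t, rstep R s t -> lstep R (label R s) (label R t)) /\
  (forall s t, rsteps R s t -> lsteps R (label R s) (label R t)).
Proof.
  intro Hlhs. apply rstep_rsteps_ind.
  - intros C rho sg HR _ IH.
    destruct (Hlhs rho HR) as [f [ls Hl]].
    rewrite !label_fill, (label_subst_lhs sg HR Hl), label_subst.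
    apply LStepApply with (ls := ls);
      [exact (rules_of_lhs HR Hl)|exact Hl|intro; apply lwf_label|].
    intros j Hj; rewrite <- !label_subst; apply IH, nth_In, Hj.
  - intro; constructor.
  - intros s t u _ Hst _ Htu; econstructor; eauto.
Qed.

Lemma rsteps_label (s t : term F) :
  (forall rho, R rho -> exists f ls, lhs rho = Fun f ls) ->
  rsteps R s t -> lsteps R (label R s) (label R t).
Proof. intros Hlhs Hst; exact (proj2 (rsteps_label_mut Hlhs) s t Hst). Qed.

Lemma sqsup_label (s t : term F) :
  (forall rho, R rho -> exists f ls, lhs rho = Fun f ls) ->
  sqsup R s t -> lsup R (label R s) (label R t).
Proof.
  intros Hlhs [C [rho [sg [i [HR [-> [Hi [Hconds ->]]]]]]]].
  destruct (Hlhs rho HR) as [f [ls Hl]].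
  exists (label_ctx C), f, (rules_of R f), rho, ls, (fun x => label R (sg x)), i.
  split; [exact (rules_of_lhs HR Hl)|].
  repeat split; auto.
  - intro; apply lwf_label.
  - rewrite label_fill, (label_subst_lhs sg HR Hl); reflexivity.
  - intros j Hj; rewrite <- !label_subst; apply rsteps_label, Hconds; auto.
  - apply label_subst.
Qed.

Lemma lsup_erase (s t : lterm F) :
  lwf R s -> lsup R s t -> sqsup R (erase s) (erase t).
Proof.
  intros Hs [C [f [L [rho [ls [sg [j [HL [Hl [Hsg [Hj [-> [Hconds ->]]]]]]]]]]]]].
  exists (erase_ctx C), rho, (fun x => erase (sg x)), j.
  repeat split; auto.
  - exact (lwf_lfill_label Hs HL).
  - rewrite erase_lfill, erase_redex, Hl; reflexivity.
  - intros i Hi; rewrite <- !erase_lapp; apply lsteps_erase; auto.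
    apply lwf_lapp; exact Hsg.
  - apply erase_lapp.
Qed.

End Labeling.

Lemma CCTRS_lhs_Fun (F : Type) (R : trs F) :
  CCTRS R -> forall rho, R rho -> exists f ls, lhs rho = Fun f ls.
Proof. intros HC rho HR; destruct (HC rho HR) as [f [ls [Hl _]]]; eauto. Qed.

Theorem lemma4 (F : Type) (R : trs F) :
  CCTRS R ->
  (forall s t : term F, sqsup R s t -> lsup R (label R s) (label R t)) /\
  (forall s t : lterm F, lwf R s -> lwf R t -> lsup R s t -> sqsup R (erase s) (erase t)).
Proof.
  intro HC. split.
  - intros s t; apply sqsup_label, CCTRS_lhs_Fun, HC.
  - intros s t Hs _; apply lsup_erase, Hs.
Qed.
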